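(* Let $G$ be a connected graph and let $H$ be a connected component of the complement $\overline{G}$ such that $H$ is isomorphic to the star $K_{1,n}$ for some $n\geq 2$. Then no vertex of $H$ is a basis forced vertex of $G$.
   Context: All graphs are finite and simple. $\overline{G}$ denotes the complement graph. For vertices $u,v$ of a connected graph $G$, $d(u,v)$ is the length of a shortest $u$–$v$ path. A set $R\subseteq V(G)$ is a resolving set if for all distinct $x,y\in V(G)$ there is $r\in R$ with $d(r,x)\neq d(r,y)$. The metric dimension $\dim(G)$ is the minimum cardinality of a resolving set, and a resolving set of cardinality $\dim(G)$ is a metric basis. A vertex is a basis forced vertex if it belongs to every metric basis of $G$. *)

From mathcomp Require Import all_boot.
Set Implicit Arguments. Unset Strict Implicit. Unset Printing Implicit Defensive.

Section Graphs.
Variable T : finType.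

Definition simple_graph (e : rel T) := symmetric e /\ irreflexive e.

Definition connected_graph (e : rel T) := forall u v : T, connect e u v.

Definition compl_rel (e : rel T) : rel T := fun x y => (x != y) && ~~ e x y.

Definition walkb (e : rel T) (u v : T) (k : nat) : bool :=
  [exists p : k.-tuple T, path e u p && (last u p == v)].

(* distance: least k such that a u-v walk of length k exists
   (for connected graphs this is < #|T|, so the search over iota 0 #|T| is exhaustive) *)
Definition dist (e : rel T) (u v : T) : nat := find (walkb e u v) (iota 0 #|T|).

Definition resolving (e : rel T) (R : {set T}) : Prop :=
  forall x y : T, x != y -> exists2 r, r \in R & dist e r x != dist e r y.

Definition metric_basis (e : rel T) (B : {set T}) : Prop :=
  resolving e B /\ forall R : {set T}, resolving e R -> #|B| <= #|R|.

Definition basis_forced (e : rel T) (v : T) : Prop :=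
  forall B : {set T}, metric_basis e B -> v \in B.

Definition component (f : rel T) (C : {set T}) : Prop :=
  exists2 x, x \in C & C = [set y | connect f x y].

End Graphs.

Definition star_rel (n : nat) : rel 'I_n.+1 :=
  fun i j => (i != j) && ((i == ord0) || (j == ord0)).

Definition induced_iso_star (T : finType) (f : rel T) (C : {set T}) (n : nat) : Prop :=
  exists g : 'I_n.+1 -> T,
    [/\ injective g, g @: setT = C & forall i j, f (g i) (g j) = star_rel i j].

From mathcomp Require Import all_boot perm.

Set Implicit Arguments. Unset Strict Implicit. Unset Printing Implicit Defensive.

(* Let c be the centre of the star C.  In G every vertex of C is adjacent to
   every vertex outside C, the leaves C :\ c form a clique and c has no
   neighbour in C.  So any two leaves are twins: their transposition is an
   automorphism of G, hence a metric basis misses at most one leaf, and a basis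
   missing a leaf can be moved off any other leaf.  Moreover a basis vertex r of
   C can be traded for the vertex of C the basis misses: a pair separated by r
   alone is r together with an outside vertex, and any non-neighbour of r in C
   separates those two.  The same argument shows that c could be dropped from
   a basis containing all of C, so no basis contains C.  Going through the
   cases (v the centre or a leaf, some leaf outside the basis or not) gives a
   metric basis avoiding v. *)

Section Distance.
Variables (T : finType) (e : rel T).

Lemma walkb0 x y : walkb e x y 0 = (x == y).
Proof.
apply/existsP/idP => [[p /andP[_]]|/eqP->]; first by rewrite (tuple0 p).
by exists [tuple]; rewrite /= eqxx.
Qed.

Lemma walkb1 x y : walkb e x y 1 = e x y.
Proof.
apply/existsP/idP => [[[[|z [|]] //= _] /andP[/andP[exz _] /eqP <-]] // | exy].
by exists [tuple y]; rewrite /= exy eqxx.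
Qed.

Lemma dist_eq0 x y : (dist e x y == 0) = (x == y).
Proof.
rewrite /dist; have : 0 < #|T| by apply/card_gt0P; exists x.
by case: #|T| => [|k] //= _; rewrite walkb0; case: (x == y).
Qed.

Lemma dist_eq1 x y : x != y -> (dist e x y == 1) = e x y.
Proof.
move=> neq_xy; have : 1 < #|T| by have := max_card [set x; y]; rewrite cards2 neq_xy.
rewrite /dist; case: #|T| => [|[|k]] //= _.
by rewrite walkb0 walkb1 (negbTE neq_xy); case: (e x y).
Qed.

Lemma dist_self_neq x y : x != y -> dist e x x != dist e x y.
Proof.
move=> neq_xy; have /eqP -> : dist e x x == 0 by rewrite dist_eq0.
by rewrite eq_sym dist_eq0.
Qed.

End Distance.

Section Automorphisms.
Variables (T : finType) (e : rel T).

Lemma walkb_mono (s : T -> T) x y k :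
  {mono s : u v / e u v} -> walkb e x y k -> walkb e (s x) (s y) k.
Proof.
move=> s_mono /existsP[p /andP[ep /eqP <-]]; apply/existsP; exists (map_tuple s p).
by rewrite /= path_map last_map eqxx andbT (eq_path (e' := e)).
Qed.

Lemma dist_perm (s : {perm T}) x y :
  {mono s : u v / e u v} -> dist e (s x) (s y) = dist e x y.
Proof.
move=> s_mono; have si_mono : {mono s^-1%g : u v / e u v}.
  by move=> u v; rewrite -s_mono !permKV.
apply: eq_find => k; apply/idP/idP; last exact: walkb_mono.
by move/(walkb_mono si_mono); rewrite !permK.
Qed.

Lemma resolving_perm (s : {perm T}) B :
  {mono s : u v / e u v} -> resolving e B -> resolving e (s @: B).
Proof.
move=> s_mono resB x y neq_xy.
have [r rB] := resB (s^-1%g x) (s^-1%g y) (contra_neq (@perm_inj _ _ _ _) neq_xy).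
by exists (s r); [exact: imset_f | rewrite -[x](permKV s) -[y](permKV s) !dist_perm].
Qed.

Definition twins (a b : T) := forall z, z != a -> z != b -> e a z = e b z.

Hypotheses (e_sym : symmetric e) (e_irr : irreflexive e).

Lemma tperm_twins_mono a b : twins a b -> {mono tperm a b : u v / e u v}.
Proof.
move=> ab_twins u v.
case: tpermP => [->|->|/eqP ua /eqP ub]; case: tpermP => [->|->|/eqP va /eqP vb];
  rewrite ?e_irr // ?(e_sym _ a) ?(e_sym _ b) ?ab_twins // -?ab_twins //.
Qed.

Lemma resolving_twins B a b :
  resolving e B -> a != b -> twins a b -> (a \in B) || (b \in B).
Proof.
move=> resB neq_ab ab_twins; apply/norP => -[aNB bNB].
have [r rB] := resB a b neq_ab; apply/negP/negPn.
have [ra rb] : r != a /\ r != b by split; apply: contraTneq rB => ->.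
by rewrite -(dist_perm r a (tperm_twins_mono ab_twins)) tpermL tpermD // eq_sym.
Qed.

End Automorphisms.

Section MetricBasis.
Variables (T : finType) (e : rel T).

Definition resolvingb (R : {set T}) :=
  [forall x, forall y, (x != y) ==> [exists r in R, dist e r x != dist e r y]].

Lemma resolvingP R : reflect (resolving e R) (resolvingb R).
Proof.
apply: (iffP forallP) => [resR x y neq_xy | resR x].
  by have /forall_inP/(_ _ neq_xy)/exists_inP[r] := resR x; exists r.
by apply/forall_inP => y /resR[r rR neq_d]; apply/exists_inP; exists r.
Qed.

Lemma resolving_setT : resolving e setT.
Proof. by move=> x y neq_xy; exists x; rewrite ?inE ?dist_self_neq. Qed.

Lemma metric_basis_exists : exists B, metric_basis e B.
Proof.
have /resolvingP resT := resolving_setT.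
case: (arg_minnP (fun R : {set T} => #|R|) resT) => B /resolvingP resB minB.
by exists B; split=> // R /resolvingP /minB.
Qed.

Lemma metric_basis_card B S :
  metric_basis e B -> resolving e S -> #|S| <= #|B| -> metric_basis e S.
Proof. by move=> [_ minB] resS leSB; split=> // R /minB; apply: leq_trans. Qed.

End MetricBasis.

Section StarComponent.
Variables (T : finType) (e : rel T) (C : {set T}) (c : T).
Hypotheses (e_sym : symmetric e) (e_irr : irreflexive e) (cC : c \in C).
Hypothesis C_join : forall z w, z \in C -> w \notin C -> e z w.
Hypothesis C_induced : {in C &, forall a b, e a b = [&& a != c, b != c & a != b]}.
Hypothesis leaf_exists : exists2 l, l \in C & l != c.

Lemma dist_join z w : z \in C -> w \notin C -> dist e z w = 1.
Proof.
move=> zC wC; apply/eqP; rewrite dist_eq1 ?C_join //.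
by apply: contraNneq wC => <-.
Qed.

Lemma leaves_twins a b : a \in C :\ c -> b \in C :\ c -> twins e a b.
Proof.
rewrite !inE => /andP[ac aC] /andP[bc bC] z za zb.
case: (boolP (z \in C)) => zC; last by rewrite !C_join.
by rewrite !C_induced // ac bc (eq_sym a) (eq_sym b) za zb.
Qed.

Lemma exists_nonneighbour r : r \in C -> exists2 u, u \in C :\ r & ~~ e u r.
Proof.
move=> rC; case: (eqVneq r c) => [->|rc].
  have [l lC lc] := leaf_exists.
  by exists l; rewrite ?inE ?lc // C_induced // eqxx andbF.
by exists c; [rewrite !inE eq_sym rc | rewrite C_induced // eqxx].
Qed.

Lemma resolving_exchange (B S : {set T}) r :
  resolving e B -> r \in C -> B :\ r \subset S -> C :\ r \subset S -> resolving e S.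
Proof.
move=> resB rC sBS sCS x y neq_xy.
case: (boolP (x \in S)) => xS; first by exists x; rewrite ?dist_self_neq.
case: (boolP (y \in S)) => yS; first by exists y; rewrite // eq_sym dist_self_neq // eq_sym.
case: (resB x y neq_xy) => s sB; case: (eqVneq s r) => [-> ds|sr ds]; last first.
  by exists s => //; apply: (subsetP sBS); rewrite !inE sr.
have outside z : z \notin S -> z != r -> z \notin C.
  by move=> zS zr; apply: contra zS => zC; apply: (subsetP sCS); rewrite !inE zr.
have sep_r w : w \notin C -> exists2 u, u \in S & dist e u r != dist e u w.
  move=> wC; have [u uCr nur] := exists_nonneighbour rC.
  exists u; first exact: (subsetP sCS).
  have [ur uC] := setD1P uCr.
  by rewrite (dist_join uC wC) dist_eq1.
have [xr|xr] := eqVneq x r; have [yr|yr] := eqVneq y r.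
- by rewrite xr yr eqxx in neq_xy.
- by rewrite xr; apply: sep_r; apply: outside.
- by have [u uS] := sep_r x (outside x xS xr); exists u; rewrite // yr eq_sym.
- by rewrite !dist_join ?outside ?eqxx in ds.
Qed.

Lemma metric_basis_not_subset B : metric_basis e B -> ~~ (C \subset B).
Proof.
move=> [resB minB]; apply/negP => sCB.
have resBc : resolving e (B :\ c) by apply: (resolving_exchange resB cC); rewrite ?setSD.
by have := minB _ resBc; rewrite (cardsD1 c B) (subsetP sCB c cC) ltnn.
Qed.

Lemma metric_basis_exchange B u v :
  metric_basis e B -> v \in C -> v \in B -> u \notin B -> C :\ v \subset u |: B ->
  metric_basis e (u |: B :\ v).
Proof.
move=> basisB vC vB uB sCB; apply: (metric_basis_card basisB).
  apply: (resolving_exchange basisB.1 vC); apply/subsetP => z; rewrite !inE.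
    by case/andP=> -> ->; rewrite orbT.
  by case/andP=> zv zC; have := subsetP sCB z; rewrite !inE zv zC; apply.
by rewrite cardsU1 (cardsD1 v B) vB !inE (negbTE uB) andbF.
Qed.

Lemma metric_basis_avoiding v : v \in C -> exists2 B, metric_basis e B & v \notin B.
Proof.
move=> vC; have [B basisB] := metric_basis_exists e.
have [vB|] := boolP (v \in B); last by exists B.
have [/exists_inP[l lCc lB] | /exists_inPn leavesB] := boolP [exists l in C :\ c, l \notin B].
  have [vc|vc] := eqVneq v c.
    exists (l |: B :\ v); last by rewrite !inE eqxx /= orbF; apply: contraNneq lB => <-.
    apply: metric_basis_exchange => //; apply/subsetP => z; rewrite vc => zCc.
    rewrite in_setU1; case: (eqVneq z l) => [//|zl] /=.
    have := resolving_twins e_sym e_irr basisB.1 zl (leaves_twins zCc lCc).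
    by rewrite (negbTE lB) orbF.
  have vCc : v \in C :\ c by rewrite !inE vc.
  have twins_vl := tperm_twins_mono e_sym e_irr (leaves_twins vCc lCc).
  exists (tperm v l @: B); last by rewrite -{1}(tpermR v l) mem_imset //; apply: perm_inj.
  apply: (metric_basis_card basisB); first exact: resolving_perm twins_vl basisB.1.
  by rewrite card_imset //; apply: perm_inj.
have cB : c \notin B.
  apply: contra (metric_basis_not_subset basisB) => cB; apply/subsetP => z zC.
  by have [->//|zc] := eqVneq z c; apply/negPn/leavesB; rewrite !inE zc.
have vc : v != c by apply: contraTneq vB => ->.
exists (c |: B :\ v); last by rewrite !inE (negbTE vc) eqxx.
apply: metric_basis_exchange => //; apply/subsetP => z; rewrite !inE => /andP[_ zC].
by have [//|zc] := eqVneq z c; apply/negPn/leavesB; rewrite !inE zc.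
Qed.

End StarComponent.

Section Complement.
Variables (T : finType) (e : rel T) (C : {set T}).

Lemma compl_component_join z w :
  component (compl_rel e) C -> z \in C -> w \notin C -> e z w.
Proof.
move=> [x _ defC] zC; apply: contraR => ezw; have [<-//|zw] := eqVneq z w.
move: zC; rewrite defC !inE => xz; apply: connect_trans xz (connect1 _).
by rewrite /compl_rel zw ezw.
Qed.

Lemma compl_star_induced c : irreflexive e ->
  {in C &, forall a b, compl_rel e a b = (a != b) && ((a == c) || (b == c))} ->
  {in C &, forall a b, e a b = [&& a != c, b != c & a != b]}.
Proof.
move=> e_irr starC a b aC bC; have [<-|ab] := eqVneq a b; first by rewrite e_irr !andbF.
by have := starC a b aC bC; rewrite /compl_rel ab andbT /= => /(congr1 negb); rewrite negbK negb_or.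
Qed.

End Complement.

Lemma induced_iso_star_center (T : finType) (f : rel T) C n : 0 < n ->
  induced_iso_star f C n ->
  exists c, [/\ c \in C, exists2 l, l \in C & l != c
              & {in C &, forall a b, f a b = (a != b) && ((a == c) || (b == c))}].
Proof.
move=> n_gt0 [g [g_inj gC g_star]]; have inC i : g i \in C by rewrite -gC imset_f ?inE.
exists (g ord0); split=> //.
  by exists (g ord_max); rewrite ?(inj_eq g_inj) -?val_eqE /= -?lt0n.
move=> a b; rewrite -gC => /imsetP[i _ ->] /imsetP[j _ ->].
by rewrite g_star !(inj_eq g_inj).
Qed.

Theorem lemma6 (T : finType) (e : rel T) (C : {set T}) (n : nat) :
  simple_graph e -> connected_graph e ->
  component (compl_rel e) C -> 2 <= n -> induced_iso_star (compl_rel e) C n ->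
  forall v, v \in C -> ~ basis_forced e v.
Proof.
move=> [e_sym e_irr] _ compC n_ge2 starC v vC.
have [c [cC leaf_exists starE]] := induced_iso_star_center (ltnW n_ge2) starC.
have C_join := compl_component_join compC.
have C_induced := compl_star_induced e_irr starE.
have [B basisB vNB] := metric_basis_avoiding e_sym e_irr cC C_join C_induced leaf_exists vC.
by move/(_ B basisB); apply/negP.
Qed.
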